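(* The maps $U_r$ for $r \le m$ are injective if and only if $U_m$ is injective.
   Context: Let $A \ge B \ge C \ge 1$ be integers, let $\Bbbk$ be a field, and let $R = \Bbbk[x,y,z]/(x^A,y^B,z^C)$ with its standard grading ($x,y,z$ of degree one), $R = \bigoplus_{r=0}^{e} R_r$ where $e := A+B+C-3$. For each $r$, let $U_r : R_r \to R_{r+1}$ be the map given by multiplication by $x+y+z$. Let $m := \lfloor \frac{e-1}{2} \rfloor$, so that $U_m$ is a map closest to the middle of $R$. *)

From mathcomp Require Import all_boot all_order all_algebra.
Set Implicit Arguments. Unset Strict Implicit. Unset Printing Implicit Defensive.
Import GRing.Theory.
Local Open Scope ring_scope.

(* R = k[x,y,z]/(x^A,y^B,z^C) has the k-basis of monomials x^a y^b z^c with
   a < A, b < B, c < C.  An exponent triple is an element of 'I_A * 'I_B * 'I_C. *)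
Definition expo (A B C : nat) := ('I_A * 'I_B * 'I_C)%type.
Definition ex_x A B C (t : expo A B C) : nat := t.1.1.
Definition ex_y A B C (t : expo A B C) : nat := t.1.2.
Definition ex_z A B C (t : expo A B C) : nat := t.2.
Definition mdeg A B C (t : expo A B C) : nat := (ex_x t + ex_y t + ex_z t)%N.

Definition mon (A B C r : nat) := {t : expo A B C | mdeg t == r}.

(* The graded piece R_r, as the k-space of coefficient vectors w.r.t. the
   monomial basis. *)
Definition Rdeg (K : fieldType) (A B C r : nat) := {ffun mon A B C r -> K}.

Definition succ_mon A B C (t t' : expo A B C) : bool :=
  [|| [&& ex_x t' == (ex_x t).+1, ex_y t' == ex_y t & ex_z t' == ex_z t],
      [&& ex_x t' == ex_x t, ex_y t' == (ex_y t).+1 & ex_z t' == ex_z t]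
    | [&& ex_x t' == ex_x t, ex_y t' == ex_y t & ex_z t' == (ex_z t).+1]].

(* U_r : R_r -> R_{r+1}, multiplication by x+y+z.  The coefficient of a
   monomial t' of degree r+1 in (x+y+z) f is the sum of the coefficients of f
   at the monomials t with t' = t*x, t*y or t*z; products falling outside the
   bounds (x^A, y^B, z^C) vanish in R, which is automatic since t' ranges
   over the basis of R_{r+1}. *)
Definition U (K : fieldType) (A B C r : nat) (f : Rdeg K A B C r) :
    Rdeg K A B C r.+1 :=
  [ffun t' : mon A B C r.+1 =>
     \sum_(t : mon A B C r | succ_mon (val t) (val t')) f t].

(* If U_r f = 0 with f <> 0 and r < e, pick a monomial t in the support of f.
   The only monomial of the top degree e is x^(A-1) y^(B-1) z^(C-1), so some
   variable v still satisfies t v <> 0 in R.  Then v f is a nonzero element of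
   degree r+1, and (x+y+z) (v f) = v ((x+y+z) f) = 0 by commutativity.  Hence
   injectivity of U_(r+1) forces injectivity of U_r for every r < e, and the
   corollary follows by descending from m <= e. *)

From HB Require Import structures.
From mathcomp Require Import all_boot all_order all_algebra zify.
Set Implicit Arguments. Unset Strict Implicit. Unset Printing Implicit Defensive.
Import GRing.Theory.
Local Open Scope ring_scope.

Inductive var := vx | vy | vz.

Definition nat_of_var v : nat := match v with vx => 0 | vy => 1 | vz => 2 end.
Lemma nat_of_var_inj : injective nat_of_var. Proof. by do 2!case. Qed.
HB.instance Definition _ := Equality.copy var (inj_type nat_of_var_inj).

Section Monomials.
Variables A B C : nat.
Implicit Types (v w : var) (s t : expo A B C).

Definition ex_var v t : nat :=
  match v with vx => ex_x t | vy => ex_y t | vz => ex_z t end.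

Definition ord_decr n (i : 'I_n) : 'I_n :=
  Ordinal (leq_ltn_trans (leq_pred i) (ltn_ord i)).

Definition div_var v t : option (expo A B C) :=
  let: (a, b, c) := t in
  if ex_var v t == 0%N then None else
  Some (match v with
        | vx => (ord_decr a, b, c)
        | vy => (a, ord_decr b, c)
        | vz => (a, b, ord_decr c) end).

Lemma expo_inj s t : (forall v, ex_var v s = ex_var v t) -> s = t.
Proof.
case: s t => [[a b] c] [[a' b'] c'] e.
move: (e vx) (e vy) (e vz); rewrite /ex_var /ex_x /ex_y /ex_z /=.
by move=> /val_inj-> /val_inj-> /val_inj->.
Qed.

Lemma div_varP v t s :
  div_var v t = Some s <-> forall w, ex_var w t = (ex_var w s + (w == v))%N.
Proof.
split.
  case: t => [[a b] c]; case: v => /=; case: ifP => // /negbT ha [<-];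
    by case=> /=; rewrite ?addn0 ?addn1 ?prednK ?lt0n.
move=> e; have := e v; rewrite eqxx addn1 => ev.
case: t e ev => [[a b] c] e ev; rewrite /div_var ev; congr Some.
apply: expo_inj => w; move: (e w).
by case: v {ev e}; case: w; case: s => [[? ?] ?]; rewrite /= /ex_x /ex_y /ex_z /=; lia.
Qed.

Lemma succ_monE t t' : succ_mon t t' =
  [|| div_var vx t' == Some t, div_var vy t' == Some t | div_var vz t' == Some t].
Proof.
rewrite /succ_mon; congr [|| _, _ | _];
  apply/idP/eqP => [/and3P[/eqP ex /eqP ey /eqP ez] | /div_varP e].
all: try by apply/div_varP => -[] /=; rewrite ?ex ?ey ?ez ?addn0 ?addn1.
all: by move: (e vx) (e vy) (e vz) => /= -> -> ->; rewrite ?addn0 ?addn1 !eqxx.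
Qed.

Lemma mdeg_div_var v t s : div_var v t = Some s -> mdeg t = (mdeg s).+1.
Proof.
move/div_varP=> e; move: (e vx) (e vy) (e vz); rewrite /mdeg /=.
by case: v {e} => /= -> -> ->; rewrite ?addn0 ?addn1 ?addnS.
Qed.

Lemma div_var_eq_var v w t s :
  div_var v t = Some s -> (div_var w t == Some s) = (w == v).
Proof.
move=> hv; apply/eqP/eqP => [hw|-> //].
move: hv hw => /div_varP/(_ w) + /div_varP/(_ w); rewrite eqxx => -> /eqP.
by rewrite eqn_add2l; case: (w =P v).
Qed.

Lemma div_varC v w t :
  obind (div_var w) (div_var v t) = obind (div_var v) (div_var w t).
Proof.
case: t => [[a b] c].
by case: v; case: w; rewrite /div_var /ex_var /ex_x /ex_y /ex_z /=;
  (repeat case: ifP => //= ?); congruence.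
Qed.

Lemma exists_div_var t : (mdeg t < A + B + C - 3)%N ->
  exists v s, div_var v s = Some t.
Proof.
case: t => [[a b] c]; rewrite /mdeg /ex_x /ex_y /ex_z /= => lt.
have multiple u s' : (forall w, ex_var w s' = (ex_var w (a, b, c) + (w == u))%N) ->
    exists v s, div_var v s = Some (a, b, c).
  by move/div_varP=> ?; exists u, s'.
case: (ltnP a.+1 A) => [ha|ha].
  by apply: (multiple vx (Ordinal ha, b, c)) => -[]; rewrite /= ?addn0 ?addn1.
case: (ltnP b.+1 B) => [hb|hb].
  by apply: (multiple vy (a, Ordinal hb, c)) => -[]; rewrite /= ?addn0 ?addn1.
case: (ltnP c.+1 C) => [hc|hc].
  by apply: (multiple vz (a, b, Ordinal hc)) => -[]; rewrite /= ?addn0 ?addn1.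
by move: (ltn_ord a) (ltn_ord b) (ltn_ord c); lia.
Qed.

End Monomials.

Lemma big_orb_disjoint (V : nmodType) (I : finType) (P Q : pred I) (F : I -> V) :
  (forall i, P i -> Q i = false) ->
  \sum_(i | P i || Q i) F i = \sum_(i | P i) F i + \sum_(i | Q i) F i.
Proof.
move=> PQ; rewrite (bigID P) /=; congr (_ + _); apply: eq_bigl => i.
  by rewrite andb_orl andbb; case: (P i) (Q i) => [] [].
case: (boolP (P i)) => [Pi|_]; first by rewrite PQ.
by rewrite andbT.
Qed.

Section MultiplicationByVariables.
Variables (K : fieldType) (A B C : nat).
Local Notation R := {ffun expo A B C -> K}.
Implicit Types (F G : R) (v w : var).

Definition mul_var v F : R := [ffun s => oapp F 0 (div_var v s)].

Definition mul_xyz F : R := mul_var vx F + mul_var vy F + mul_var vz F.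

Lemma mul_varD v F G : mul_var v (F + G) = mul_var v F + mul_var v G.
Proof.
by apply/ffunP => s; rewrite !ffunE; case: div_var => [t|] /=; rewrite ?ffunE ?addr0.
Qed.

Lemma mul_varC v w F : mul_var v (mul_var w F) = mul_var w (mul_var v F).
Proof.
have oapp_mul_var u o : oapp (mul_var u F) 0 o = oapp F 0 (obind (div_var u) o).
  by case: o => //= t; rewrite ffunE.
by apply/ffunP => s; rewrite !ffunE !oapp_mul_var div_varC.
Qed.

Lemma mul_xyz_mul_var v F : mul_xyz (mul_var v F) = mul_var v (mul_xyz F).
Proof. by rewrite /mul_xyz !mul_varD; congr (_ + _ + _); apply: mul_varC. Qed.

Definition homog r F := forall t, mdeg t != r -> F t = 0.

Lemma homog_mul_var r v F : homog r F -> homog r.+1 (mul_var v F).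
Proof.
move=> hF t ht; rewrite ffunE; case E: (div_var v t) => [s|] //=.
by apply: hF; apply: contra ht => /eqP ds; rewrite (mdeg_div_var E) ds.
Qed.

Lemma homogD r F G : homog r F -> homog r G -> homog r (F + G).
Proof. by move=> hF hG t ht; rewrite ffunE hF ?hG ?addr0. Qed.

Lemma homog_mul_xyz r F : homog r F -> homog r.+1 (mul_xyz F).
Proof. by move=> hF; do ![apply: homogD]; apply: homog_mul_var. Qed.

Definition extend r (f : Rdeg K A B C r) : R :=
  [ffun t => if insub t is Some s then f s else 0].

Definition restrict r F : Rdeg K A B C r := [ffun s => F (val s)].

Lemma extend_val r (f : Rdeg K A B C r) s : extend f (val s) = f s.
Proof. by rewrite ffunE valK. Qed.

Lemma homog_extend r (f : Rdeg K A B C r) : homog r (extend f).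
Proof. by move=> t ht; rewrite ffunE insubN. Qed.

Lemma extend_restrict r F : homog r F -> extend (restrict r F) = F.
Proof.
move=> hF; apply/ffunP => t; rewrite ffunE.
by case: insubP => [s _ <-|/hF ->]; rewrite ?ffunE.
Qed.

Lemma sum_mon_div r v (f : Rdeg K A B C r) (t' : expo A B C) : mdeg t' = r.+1 ->
  \sum_(t : mon A B C r | div_var v t' == Some (val t)) f t
    = oapp (extend f) 0 (div_var v t').
Proof.
case E: (div_var v t') => [s|] /= dt'; last by rewrite big_pred0.
have ds : mdeg s == r by rewrite -eqSS -dt' (mdeg_div_var E).
rewrite (big_pred1 (Sub s ds)) => [|t]; first by rewrite -extend_val SubK.
by rewrite inE -val_eqE SubK eq_sym.
Qed.

Lemma UE r (f : Rdeg K A B C r) : U f = restrict r.+1 (mul_xyz (extend f)).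
Proof.
apply/ffunP => t'; have /eqP dt' := valP t'.
rewrite !ffunE (eq_bigl _ _ (fun t => succ_monE (val t) (val t'))).
by rewrite !big_orb_disjoint ?(sum_mon_div _ _ dt') ?addrA // => t /eqP hx;
  rewrite !(div_var_eq_var _ hx).
Qed.

Lemma U_zmod_morphism r : zmod_morphism (@U K A B C r).
Proof.
move=> f g; apply/ffunP => t; rewrite !ffunE -sumrB.
by apply: eq_bigr => s _; rewrite !ffunE.
Qed.

HB.instance Definition _ r :=
  GRing.isZmodMorphism.Build (Rdeg K A B C r) (Rdeg K A B C r.+1) (@U K A B C r)
    (@U_zmod_morphism r).

Lemma mul_xyz_extend_eq0 r (f : Rdeg K A B C r) : U f = 0 -> mul_xyz (extend f) = 0.
Proof.
move=> Uf0; apply/ffunP => t; rewrite [RHS]ffunE.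
case: (boolP (mdeg t == r.+1)) => dt; last exact: homog_mul_xyz (homog_extend f) t dt.
by move/ffunP/(_ (Sub t dt)): Uf0; rewrite UE !ffunE.
Qed.

Lemma U_inj_pred r : (r < A + B + C - 3)%N ->
  injective (@U K A B C r.+1) -> injective (@U K A B C r).
Proof.
move=> r_lt_e injU; apply: raddf_inj => f Uf0; apply/ffunP => t; rewrite ffunE.
apply/eqP/negPn/negP => ft.
have [v [s hs]] : exists v s, div_var v s = Some (val t).
  by apply: exists_div_var; rewrite (eqP (valP t)).
pose g := restrict r.+1 (mul_var v (extend f)).
have extend_g : extend g = mul_var v (extend f).
  exact/extend_restrict/homog_mul_var/homog_extend.
have Ug0 : U g = 0.
  rewrite UE extend_g mul_xyz_mul_var mul_xyz_extend_eq0 //.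
  by apply/ffunP => s'; rewrite !ffunE; case: div_var => //= ?; rewrite ffunE.
have g0 : g = 0 by apply: injU; rewrite Ug0 raddf0.
have ds : mdeg s == r.+1 by rewrite (mdeg_div_var hs) (eqP (valP t)).
have g_s : g (Sub s ds) = f t by rewrite !ffunE /= hs /= extend_val.
by move/negP: ft; apply; rewrite -g_s g0 ffunE.
Qed.

Lemma U_inj_le r s : (s <= A + B + C - 3)%N ->
  injective (@U K A B C s) -> (r <= s)%N -> injective (@U K A B C r).
Proof.
elim: s => [|s IH] se injU; first by rewrite leqn0 => /eqP->.
rewrite leq_eqVlt => /orP[/eqP-> // | rs].
exact: IH (ltnW se) (U_inj_pred se injU) rs.
Qed.

End MultiplicationByVariables.

Theorem corollary2 (K : fieldType) (A B C : nat)
    (hC : (1 <= C)%N) (hBC : (C <= B)%N) (hAB : (B <= A)%N) :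
  let e := (A + B + C - 3)%N in
  let m := (e.-1)./2 in
  (forall r : nat, (r <= m)%N -> injective (@U K A B C r)) <->
  injective (@U K A B C m).
Proof.
move=> e m; split => [injU | injUm r rm]; first exact: injU.
have me : (m <= e)%N by rewrite /m leq_half_double; lia.
exact: U_inj_le me injUm rm.
Qed.
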